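(* Let $A\in\mathbb{R}^{m\times d}$ have the phase retrieval property in $\mathbb{R}^d$ and let $\Omega\subset U_A$ be a convex domain. Then there exists a constant $\alpha>0$ depending only on $A$ such that $\alpha\cdot\mathrm{dist}(\Phi_A(b),\Phi_A(b'))\le\|b-b'\|$ for all $b,b'\in\Omega$.
   Context: $\|\cdot\|$ is the Euclidean norm, $|Ax|$ the entrywise absolute value. $A$ has the phase retrieval property in $\mathbb{R}^d$ if $|Ax|=|Ay|$ implies $x=\pm y$. $\Phi_A(b):=\operatorname{argmin}_{x\in\mathbb{R}^d}\|\,|Ax|-b\,\|^2$. $\mathcal{K}_A:=\{|Ax|:x\in\mathbb{R}^d\}$; $U_A$ is the set of $b\in\mathbb{R}^m$ having exactly one nearest point in $\mathcal{K}_A$. $\mathrm{dist}(\Phi_A(b),\Phi_A(b')):=\min\{\|x-cy\|: x\in\Phi_A(b),\,y\in\Phi_A(b'),\,c\in\{1,-1\}\}$. *)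

From HB Require Import structures.
From mathcomp Require Import all_boot all_order all_algebra.
From mathcomp Require Import boolp classical_sets reals.
Set Implicit Arguments. Unset Strict Implicit. Unset Printing Implicit Defensive.
Import Order.TTheory GRing.Theory Num.Theory.
Local Open Scope ring_scope.
Local Open Scope classical_set_scope.

Section PR.
Variable R : realType.

Definition enorm n (v : 'cV[R]_n) : R := Num.sqrt (\sum_(i < n) (v i 0) ^+ 2).

Definition absv n (v : 'cV[R]_n) : 'cV[R]_n := \col_i `|v i 0|.

Definition phase_retrieval m d (A : 'M[R]_(m, d)) : Prop :=
  forall x y : 'cV[R]_d, absv (A *m x) = absv (A *m y) -> x = y \/ x = - y.

Definition PhiA m d (A : 'M[R]_(m, d)) (b : 'cV[R]_m) : set 'cV[R]_d :=
  [set x | forall z : 'cV[R]_d,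
     enorm (absv (A *m x) - b) ^+ 2 <= enorm (absv (A *m z) - b) ^+ 2].

Definition KA m d (A : 'M[R]_(m, d)) : set 'cV[R]_m :=
  [set v | exists x : 'cV[R]_d, v = absv (A *m x)].

Definition nearest m (K : set 'cV[R]_m) (b p : 'cV[R]_m) : Prop :=
  K p /\ forall q, K q -> enorm (b - p) <= enorm (b - q).

Definition UA m d (A : 'M[R]_(m, d)) : set 'cV[R]_m :=
  [set b | exists p, nearest (KA A) b p /\ forall p', nearest (KA A) b p' -> p' = p].

(* dist(Phi_A(b), Phi_A(b')) = min { ||x - c y|| : x in Phi_A(b), y in Phi_A(b'), c = +-1 }
   (rendered as the infimum of that set) *)
Definition distPhi m d (A : 'M[R]_(m, d)) (b b' : 'cV[R]_m) : R :=
  inf [set r | exists (x y : 'cV[R]_d) (c : R),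
         [/\ PhiA A b x, PhiA A b' y, (c = 1 \/ c = -1) & r = enorm (x - c *: y)]].

Definition convex_set m (O : set 'cV[R]_m) : Prop :=
  forall u v (t : R), O u -> O v -> 0 <= t <= 1 -> O (t *: u + (1 - t) *: v).

Definition open_set m (O : set 'cV[R]_m) : Prop :=
  forall b, O b -> exists2 e : R, 0 < e & forall b', enorm (b' - b) < e -> O b'.

(* convex domain: nonempty, open, convex (hence connected) *)
Definition convex_domain m (O : set 'cV[R]_m) : Prop :=
  [/\ O !=set0, open_set O & convex_set O].

End PR.

From mathcomp Require Import all_boot all_order all_algebra.
From mathcomp Require Import boolp classical_sets reals topology normedtype derive.
From mathcomp.algebra_tactics Require Import ring lra.
Set Implicit Arguments. Unset Strict Implicit. Unset Printing Implicit Defensive.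
Import Order.TTheory GRing.Theory Num.Theory.
Local Open Scope ring_scope.
Local Open Scope classical_set_scope.
Import numFieldNormedType.Exports.

(* For every index set S, the rows of A in S or the rows outside S have trivial kernel (the
   complement property).  Comparing |Ax| - |Ay| with A(x - y) on the rows where (Ax)_i (Ay)_i >= 0
   and with A(x + y) on the others yields C with min_{c = +-1} ||x - c y|| <= C || |Ax| - |Ay| ||.
   Since Phi_A(b) consists of the x for which |Ax| is a nearest point of b in K_A, it remains to
   show that nearest points p, p' of b, b' in Omega satisfy ||p - p'|| <= ||b - b'||.
   Now K_A is the union, over the sign patterns s, of the convex cones {diag(s) A x >= 0}, and
   projecting onto a convex set is 1-Lipschitz.  At a point with a unique nearest point p, every
   nearest point of a nearby point lies in a cone whose own projection of b is p, so the
   nearest-point map is locally 1-Lipschitz on U_A; along the segment [b, b'], which lies in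
   Omega, a supremum argument turns this into the global bound. *)

Section Euclid.
Variables (R : realType) (n : nat).
Implicit Types u v w : 'cV[R]_n.

Definition dot u v : R := \sum_i u i 0 * v i 0.

Lemma dotC u v : dot u v = dot v u.
Proof. by apply: eq_bigr => i _; rewrite mulrC. Qed.

Lemma dotDl u v w : dot (u + v) w = dot u w + dot v w.
Proof. by rewrite /dot -big_split; apply: eq_bigr => i _; rewrite !mxE mulrDl. Qed.

Lemma dotZl (c : R) u w : dot (c *: u) w = c * dot u w.
Proof. by rewrite /dot mulr_sumr; apply: eq_bigr => i _; rewrite !mxE mulrA. Qed.

Lemma dotNl u w : dot (- u) w = - dot u w.
Proof. by rewrite -scaleN1r dotZl mulN1r. Qed.

Lemma dotBl u v w : dot (u - v) w = dot u w - dot v w.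
Proof. by rewrite dotDl dotNl. Qed.

Lemma dotNr u v : dot u (- v) = - dot u v.
Proof. by rewrite dotC dotNl dotC. Qed.

Lemma dotDr u v w : dot w (u + v) = dot w u + dot w v.
Proof. by rewrite dotC dotDl !(dotC w). Qed.

Lemma dotBr u v w : dot w (u - v) = dot w u - dot w v.
Proof. by rewrite dotC dotBl !(dotC w). Qed.

Lemma dotZr (c : R) u w : dot w (c *: u) = c * dot w u.
Proof. by rewrite dotC dotZl dotC. Qed.

Lemma dot_ge0 u : 0 <= dot u u.
Proof. by apply: sumr_ge0 => i _; rewrite -expr2 sqr_ge0. Qed.

Lemma dot_eq0 u : dot u u = 0 -> u = 0.
Proof.
move=> /eqP; rewrite psumr_eq0 => [/allP u0|i _]; last by rewrite -expr2 sqr_ge0.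
apply/matrixP => i j; rewrite (ord1 j) mxE.
by have := u0 i (mem_index_enum _); rewrite -expr2 sqrf_eq0 => /eqP.
Qed.

Lemma enorm_dot u : enorm u = Num.sqrt (dot u u).
Proof. by congr Num.sqrt; apply: eq_bigr => i _; rewrite expr2. Qed.

Lemma enorm_ge0 u : 0 <= enorm u.
Proof. exact: sqrtr_ge0. Qed.

Lemma sqr_enorm u : enorm u ^+ 2 = dot u u.
Proof. by rewrite enorm_dot sqr_sqrtr // dot_ge0. Qed.

Lemma sqr_enormE u : enorm u ^+ 2 = \sum_i u i 0 ^+ 2.
Proof. by rewrite sqr_enorm; apply: eq_bigr => i _; rewrite expr2. Qed.

Lemma ler_enorm_sqr u v : enorm u ^+ 2 <= enorm v ^+ 2 -> enorm u <= enorm v.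
Proof. by rewrite ler_pXn2r // nnegrE enorm_ge0. Qed.

Lemma sqr_dot_le u v : dot u v ^+ 2 <= dot u u * dot v v.
Proof.
have [v0|v_neq0] := eqVneq (dot v v) 0.
  rewrite (dot_eq0 v0) /dot big1 ?expr0n ?mulr_ge0 ?dot_ge0 // => i _.
  by rewrite mxE mulr0.
have v_gt0 : 0 < dot v v by rewrite lt_neqAle eq_sym v_neq0 dot_ge0.
have := dot_ge0 (dot v v *: u - dot u v *: v).
rewrite !(dotBl, dotBr, dotZl, dotZr) (dotC v u) => nonneg.
have : 0 <= dot v v * (dot u u * dot v v - dot u v ^+ 2) by lra.
by rewrite pmulr_rge0 // subr_ge0.
Qed.

Lemma dot_le_enorm u v : dot u v <= enorm u * enorm v.
Proof.
rewrite !enorm_dot -sqrtrM ?dot_ge0 // (le_trans (ler_norm _)) //.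
by rewrite -sqrtr_sqr ler_sqrt ?mulr_ge0 ?dot_ge0 ?sqr_dot_le.
Qed.

Lemma ler_enormD u v : enorm (u + v) <= enorm u + enorm v.
Proof.
rewrite -(@ler_pXn2r _ 2) ?nnegrE ?addr_ge0 ?enorm_ge0 //.
rewrite sqrrD !sqr_enorm dotDl !dotDr (dotC v u).
have := dot_le_enorm u v; lra.
Qed.

Lemma enormZ (c : R) u : enorm (c *: u) = `|c| * enorm u.
Proof. by rewrite !enorm_dot dotZl dotZr mulrA -expr2 sqrtrM ?sqr_ge0 // sqrtr_sqr. Qed.

Lemma enormN u : enorm (- u) = enorm u.
Proof. by rewrite -scaleN1r enormZ normrN1 mul1r. Qed.

Lemma enorm0 : enorm (0 : 'cV[R]_n) = 0.
Proof. by rewrite -(scale0r 0) enormZ normr0 mul0r. Qed.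

Lemma enorm_distC u v : enorm (u - v) = enorm (v - u).
Proof. by rewrite -enormN opprB. Qed.

Lemma ler_enorm_distD u v w : enorm (u - w) <= enorm (u - v) + enorm (v - w).
Proof. by have := ler_enormD (u - v) (v - w); rewrite addrA subrK. Qed.

Lemma ler_enorm_dist_dist u v : `|enorm u - enorm v| <= enorm (u - v).
Proof.
rewrite ler_norml; apply/andP; split.
  by have := ler_enormD (v - u) u; rewrite subrK enorm_distC; lra.
by have := ler_enormD (u - v) v; rewrite subrK; lra.
Qed.

Lemma enorm_le_entrywise u v : (forall i, `|u i 0| <= `|v i 0|) -> enorm u <= enorm v.
Proof.
move=> uv; apply: ler_enorm_sqr; rewrite !sqr_enormE; apply: ler_sum => i _.
rewrite -(real_normK (num_real (u i 0))) -(real_normK (num_real (v i 0))).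
by rewrite ler_sqr ?nnegrE.
Qed.

Lemma ler_entry_enorm u i : `|u i 0| <= enorm u.
Proof.
rewrite -sqrtr_sqr /enorm ler_sqrt; last by apply: sumr_ge0 => j _; rewrite sqr_ge0.
by rewrite (bigD1 i) //= ler_wpDr // sumr_ge0 // => j _; rewrite sqr_ge0.
Qed.

End Euclid.

Section MatrixBounds.
Variable R : realType.

Lemma ex_enorm_mulmx_ubound k n (M : 'M[R]_(k, n)) :
  exists2 c, 0 <= c & forall w, enorm (M *m w) <= c * enorm w.
Proof.
exists (Num.sqrt (\sum_i \sum_j M i j ^+ 2)) => [|w]; first exact: sqrtr_ge0.
rewrite -(@ler_pXn2r _ 2) ?nnegrE ?mulr_ge0 ?enorm_ge0 ?sqrtr_ge0 //.
rewrite sqr_enormE exprMn sqr_sqrtr; last by do 2 (apply: sumr_ge0 => ? _); rewrite sqr_ge0.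
rewrite sqr_enorm mulr_suml; apply: ler_sum => i _.
pose r : 'cV[R]_n := \col_j M i j.
have -> : (M *m w) i 0 = dot r w by rewrite mxE; apply: eq_bigr => j _; rewrite mxE.
have -> : \sum_j M i j ^+ 2 = dot r r.
  by rewrite -sqr_enorm sqr_enormE; apply: eq_bigr => j _; rewrite mxE.
exact: sqr_dot_le.
Qed.

Definition trivial_kernel k n (B : 'M[R]_(k, n)) := forall z : 'cV[R]_n, B *m z = 0 -> z = 0.

Lemma trivial_kernel_enorm_lbound k n (B : 'M[R]_(k, n)) : trivial_kernel B ->
  exists2 c, 0 <= c & forall z, enorm z <= c * enorm (B *m z).
Proof.
move=> B_inj.
have /row_freeP [L LB] : row_free B^T.
  apply: inj_row_free => v vB; apply: trmx_inj; rewrite trmx0; apply: B_inj.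
  by rewrite -[B]trmxK -trmx_mul vB trmx0.
have [c c0 Lc] := ex_enorm_mulmx_ubound L^T.
exists c => // z; have {1}-> : z = L^T *m (B *m z).
  by rewrite mulmxA -[B]trmxK -trmx_mul LB trmx1 mul1mx.
exact: Lc.
Qed.

End MatrixBounds.

Section NearestConvex.
Variables (R : realType) (n : nat).
Implicit Types (C D : set 'cV[R]_n) (b q z : 'cV[R]_n).

Lemma nearest_sub C D b q : C `<=` D -> C q -> nearest D b q -> nearest C b q.
Proof. by move=> CD Cq [_ q_min]; split=> // z /CD; exact: q_min. Qed.

(* Otherwise a small step from [q] towards [z] would get closer to [b]. *)
Lemma nearest_convex_dot_le0 C b q z :
  convex_set C -> nearest C b q -> C z -> dot (b - q) (z - q) <= 0.
Proof.
move=> C_convex [Cq q_min] Cz.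
have closer t : 0 <= t <= 1 -> enorm (b - q) <= enorm ((b - q) - t *: (z - q)).
  move=> t01; have -> : (b - q) - t *: (z - q) = b - (t *: z + (1 - t) *: q).
    by apply/matrixP => i j; rewrite !mxE; ring.
  exact: q_min _ (C_convex z q t Cz Cq t01).
move: closer; set r := b - q; set w := z - q; clearbody r w => closer.
rewrite leNgt; apply/negP => a_gt0.
have N_ge0 : 0 <= dot w w := dot_ge0 w.
pose t := Num.min 1 (dot r w / (dot w w + 1)).
have t_gt0 : 0 < t by rewrite lt_min ltr01 divr_gt0 //; lra.
have t01 : 0 <= t <= 1 by rewrite (ltW t_gt0) ge_min lexx.
have tN : t * dot w w <= dot r w.
  have t_le : t <= dot r w / (dot w w + 1) by rewrite ge_min lexx orbT.
  apply: le_trans (ler_wpM2r N_ge0 t_le) _.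
  by rewrite mulrAC ler_pdivrMr ?ler_wpM2l //; lra.
have := closer t t01; rewrite -(@ler_pXn2r _ 2) ?nnegrE ?enorm_ge0 // !sqr_enorm.
rewrite !(dotBl, dotBr, dotZl, dotZr) (dotC w r); nra.
Qed.

Lemma nearest_convex_lipschitz C b b' q q' : convex_set C ->
  nearest C b q -> nearest C b' q' -> enorm (q - q') <= enorm (b - b').
Proof.
move=> C_convex bq bq'.
have : enorm (q - q') ^+ 2 <= dot (b - b') (q - q').
  move: (nearest_convex_dot_le0 C_convex bq (proj1 bq')).
  move: (nearest_convex_dot_le0 C_convex bq' (proj1 bq)).
  have -> : q' - q = - (q - q') by rewrite opprB.
  have -> : b' - q' = (b - q) - (b - b') + (q - q').
    by apply/matrixP => i j; rewrite !mxE; ring.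
  rewrite sqr_enorm; move: (b - q) (b - b') (q - q') => r s w.
  rewrite !(dotDl, dotNl, dotNr); lra.
move/le_trans/(_ (dot_le_enorm _ _)); rewrite expr2.
have [->|qq'_neq0] := eqVneq (enorm (q - q')) 0; first by rewrite enorm_ge0.
by rewrite mulrC ler_pM2r // lt_neqAle eq_sym qq'_neq0 enorm_ge0.
Qed.

End NearestConvex.

Lemma ex_lbound_gt0 (R : realType) (I : finType) (r : I -> R) :
  (forall i, 0 < r i) -> exists2 e, 0 < e & forall i, e <= r i.
Proof.
move=> r_gt0; exists (\big[Num.min/1]_i r i) => [|i].
  by elim/big_ind: _ => // x y x_gt0 y_gt0; rewrite lt_min x_gt0 y_gt0.
by rewrite (bigD1 i) //= ge_min lexx.
Qed.

Section LocallyLipschitzSegment.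
Variables (R : realType) (m : nat) (g : R -> 'cV[R]_m) (L : R).

Let lipschitz_at s e :=
  forall u, 0 <= u <= 1 -> `|u - s| < e -> enorm (g u - g s) <= `|u - s| * L.
Let bounded_at t := enorm (g t - g 0) <= t * L.

Lemma lipschitz_at_extend s e : 0 <= s <= 1 -> 0 < e -> lipschitz_at s e ->
  (forall t, 0 < t < s -> bounded_at t) ->
  forall t, 0 <= t <= 1 -> t < s + e -> bounded_at t.
Proof.
move=> /andP [s_ge0 s_le1] e_gt0 s_lip below t /andP [t_ge0 t_le1] t_lt.
have bounded0 : bounded_at 0 by rewrite /bounded_at subrr enorm0 mul0r.
have [t_lt_s|s_le_t] := ltP t s.
  have [->|t_neq0] := eqVneq t 0; first exact: bounded0.
  by apply: below; rewrite t_lt_s lt_neqAle eq_sym t_neq0 t_ge0.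
have [v [v_ge0 v_le_s sv_lt_e bv]] :
    exists v, [/\ 0 <= v, v <= s, s - v < e & bounded_at v].
  have [s_small|s_large] := leP (s - e / 2) 0.
    by exists 0; split; rewrite ?lexx //; lra.
  exists (s - e / 2); split; [lra | lra | lra | apply: below; lra].
have gts : enorm (g t - g s) <= (t - s) * L.
  by have := s_lip t; rewrite t_ge0 t_le1 ger0_norm ?subr_ge0 //; apply=> //; lra.
have gvs : enorm (g v - g s) <= (s - v) * L.
  have := s_lip v; rewrite v_ge0 (le_trans v_le_s s_le1) distrC.
  by rewrite ger0_norm ?subr_ge0 //; apply.
apply: le_trans (ler_enorm_distD _ (g s) _) _.
have := ler_enorm_distD (g s) (g v) (g 0); rewrite (enorm_distC (g s) (g v)).
move: bv; rewrite /bounded_at; lra.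
Qed.

Lemma locally_lipschitz_01 :
  (forall s, 0 <= s <= 1 -> exists2 e, 0 < e & lipschitz_at s e) ->
  enorm (g 1 - g 0) <= L.
Proof.
move=> local_lip.
pose S := [set s | 0 <= s <= 1 /\ forall t, 0 < t <= s -> bounded_at t].
have S0 : S 0 by split=> [|t]; [rewrite lexx ler01 | lra].
have S_ub : ubound S 1 by move=> u [/andP[]].
have S_sup : has_sup S by split; [exists 0 | exists 1].
have s01 : 0 <= sup S <= 1.
  by rewrite (sup_upper_bound S_sup S0) ge_sup //; exists 0.
have below t : 0 < t < sup S -> bounded_at t.
  case/andP=> t_gt0 /(sup_gt (ex_intro _ 0 S0)) [u [_ u_bounded] tu].
  by apply: u_bounded; rewrite t_gt0 ltW.
have [e e_gt0 s_lip] := local_lip _ s01.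
have extend := lipschitz_at_extend s01 e_gt0 s_lip below.
have s1 : sup S = 1.
  have : S (Num.min 1 (sup S + e / 2)).
    split=> [|t /andP [t_gt0 t_le]].
      by rewrite ge_min lexx le_min ler01 /=; lra.
    apply: extend; move: t_le; rewrite le_min => /andP[]; lra.
  move/(sup_upper_bound S_sup); rewrite ge_min => /orP[]; lra.
by rewrite -[L]mul1r; apply: extend; lra.
Qed.

End LocallyLipschitzSegment.

Section NearestUnion.
Variables (R : realType) (n : nat) (I : finType) (K : I -> set 'cV[R]_n).
Hypothesis K_convex : forall i, convex_set (K i).
Hypothesis K_nearest : forall i b, exists q, nearest (K i) b q.

Local Notation KU := (\bigcup_i K i).

Definition unique_nearest (C : set 'cV[R]_n) b p :=
  nearest C b p /\ forall p', nearest C b p' -> p' = p.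

(* A piece [K i] not realising the distance from [b] stays, by a fixed gap, too far from the
   points close to [b]; the pieces realising it all project [b] to [p], and projecting onto
   any of them is 1-Lipschitz. *)
Lemma unique_nearest_bigcup_local b p : unique_nearest KU b p ->
  exists2 e, 0 < e & forall u q, enorm (u - b) < e -> nearest KU u q ->
    enorm (q - p) <= enorm (u - b).
Proof.
move=> [bp p_uniq].
have /choice [proj projP] : forall ib : I * 'cV[R]_n, exists q, nearest (K ib.1) ib.2 q.
  by move=> [i c]; exact: K_nearest.
pose dist i u := enorm (u - proj (i, u)).
have dist_le i u q : K i q -> dist i u <= enorm (u - q) by case: (projP (i, u)) => _; apply.
have dist_lip i u v : dist i u <= dist i v + enorm (u - v).
  apply: le_trans (dist_le _ _ _ (proj1 (projP (i, v)))) _.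
  by apply: le_trans (ler_enorm_distD u v _) _; rewrite [leRHS]addrC.
pose gap i := if enorm (b - p) < dist i b then dist i b - enorm (b - p) else 1.
have [e e_gt0 e_gap] : exists2 e, 0 < e & forall i, e <= gap i / 2.
  by apply: ex_lbound_gt0 => i; rewrite /gap; case: ifP => // ?; lra.
exists e => // u q ub uq.
have [j _ Kjq] := proj1 uq.
have active : dist j b <= enorm (b - p).
  rewrite leNgt; apply/negP => inactive.
  have := e_gap j; rewrite /gap inactive => gap_j.
  have uq_up : enorm (u - q) <= enorm (u - b) + enorm (b - p).
    by apply: le_trans (proj2 uq p _) (ler_enorm_distD _ _ _); case: bp.
  have := dist_lip j b u; have := dist_le j u q Kjq.
  rewrite (enorm_distC b u); lra.
have pj : proj (j, b) = p.
  apply: p_uniq; split; first by exists j => //; case: (projP (j, b)).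
  by move=> z KUz; apply: le_trans active _; exact: (proj2 bp).
have bp_j : nearest (K j) b p by rewrite -pj; exact: projP (j, b).
have uq_j : nearest (K j) u q by apply: nearest_sub Kjq uq; exact: bigcup_sup.
exact: nearest_convex_lipschitz (@K_convex j) uq_j bp_j.
Qed.

Lemma unique_nearest_bigcup_segment b b' p p' :
  (forall t, 0 <= t <= 1 -> exists p, unique_nearest KU (t *: b' + (1 - t) *: b) p) ->
  nearest KU b p -> nearest KU b' p' -> enorm (p - p') <= enorm (b - b').
Proof.
move=> segment_unique bp bp'.
pose bt t := t *: b' + (1 - t) *: b.
have bt_dist t u : enorm (bt u - bt t) = `|u - t| * enorm (b - b').
  have -> : bt u - bt t = (u - t) *: (b' - b) by apply/matrixP => i j; rewrite !mxE; ring.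
  by rewrite enormZ enorm_distC.
have /choice [g gP] : forall t, exists p, 0 <= t <= 1 -> unique_nearest KU (bt t) p.
  move=> t; have [t01|] := pselect (0 <= t <= 1); last by exists 0.
  by have [q tq] := segment_unique t t01; exists q.
have g_lip : enorm (g 1 - g 0) <= enorm (b - b').
  apply: locally_lipschitz_01 => s s01.
  have [e e_gt0 e_lip] := unique_nearest_bigcup_local (gP s s01).
  exists (e / (enorm (b - b') + 1)) => [|u u01 us].
    by rewrite divr_gt0 // ltr_wpDl ?enorm_ge0.
  have bt_near : enorm (bt u - bt s) < e.
    rewrite bt_dist; move: us; rewrite ltr_pdivlMr ?ltr_wpDl ?enorm_ge0 //.
    by have := normr_ge0 (u - s); have := enorm_ge0 (b - b'); nra.
  by rewrite -bt_dist; exact: e_lip bt_near (proj1 (gP u u01)).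
have bt0 : bt 0 = b by rewrite /bt scale0r add0r subr0 scale1r.
have bt1 : bt 1 = b' by rewrite /bt scale1r subrr scale0r addr0.
have [g0 g1] : g 0 = p /\ g 1 = p'.
  split; [apply/esym/(proj2 (gP 0 _)) | apply/esym/(proj2 (gP 1 _))];
  by rewrite ?bt0 ?bt1 ?lexx ?ler01.
by rewrite enorm_distC -g0 -g1.
Qed.

End NearestUnion.

Lemma lipschitz_continuous (R : realType) (V : normedModType R) (f : V -> R) (c : R) :
  0 <= c -> (forall x y, `|f x - f y| <= c * `|x - y|) -> continuous f.
Proof.
move=> c_ge0 f_lip x; apply/cvgrPdist_lt => e e_gt0.
have ec_gt0 : 0 < e / (c + 1) by rewrite divr_gt0 // ltr_wpDl.
near=> y; apply: le_lt_trans (f_lip x y) _.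
have : `|x - y| < e / (c + 1).
  by near: y; exact: (@cvgr_dist_lt _ _ _ (nbhs x) (nbhs_filter x) id x cvg_id _ ec_gt0).
rewrite ltr_pdivlMr ?ltr_wpDl // => xy.
by apply: le_lt_trans xy; have := normr_ge0 (x - y); nra.
Unshelve. all: by end_near.
Qed.

Section NonnegRange.
Variables (R : realType) (k n : nat).

Definition nonneg_range (B : 'M[R]_(k, n)) : set 'cV[R]_k :=
  [set B *m x | x in [set x | forall i, 0 <= (B *m x) i 0]].

Lemma nonneg_range_convex B : convex_set (nonneg_range B).
Proof.
move=> _ _ t [x x_ge0 <-] [y y_ge0 <-] /andP [t_ge0 t_le1].
exists (t *: x + (1 - t) *: y); last by rewrite mulmxDr -!scalemxAr.
move=> i; have := x_ge0 i; have := y_ge0 i.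
rewrite mulmxDr -!scalemxAr !mxE => yi xi.
by rewrite addr_ge0 // mulr_ge0 // subr_ge0.
Qed.

Lemma mx_norm_le_enorm (r : 'rV[R]_n) : `|r| <= enorm r^T.
Proof.
rewrite [leLHS]/Num.norm /= mx_normrE; apply: bigmax_le => [|[i j] _ /=].
  exact: enorm_ge0.
by rewrite (ord1 i); have := ler_entry_enorm r^T j; rewrite mxE.
Qed.

Lemma enorm_le_mx_norm (r : 'rV[R]_n) : enorm r^T <= n%:R * `|r|.
Proof.
rewrite -(@ler_pXn2r _ 2) ?nnegrE ?enorm_ge0 ?mulr_ge0 // sqr_enormE.
apply: (@le_trans _ _ (\sum_(i < n) `|r| ^+ 2)).
  apply: ler_sum => i _; rewrite mxE -[leLHS]real_normK ?num_real // ler_sqr ?nnegrE //.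
  by rewrite [leRHS]/Num.norm /= mx_normrE; apply/bigmax_geP; right; exists (0, i).
rewrite sumr_const card_ord exprMn -[leLHS]mulr_natl ler_wpM2r ?sqr_ge0 //.
by rewrite -natrX ler_nat; case: n => // n'; rewrite expnS expn1 leq_pmulr.
Qed.

Lemma mulmx_tr_lipschitz (B : 'M[R]_(k, n)) :
  exists2 c, 0 <= c & forall r r' : 'rV[R]_n, enorm (B *m r^T - B *m r'^T) <= c * `|r - r'|.
Proof.
have [c c_ge0 Bc] := ex_enorm_mulmx_ubound B.
exists (c * n%:R) => [|r r']; first exact: mulr_ge0.
rewrite -mulmxBr -linearB -mulrA; apply: le_trans (Bc _) _.
by rewrite ler_wpM2l // enorm_le_mx_norm.
Qed.

Lemma coercive_far_enorm_ge (B : 'M[R]_(k, n)) b c y : 0 <= c ->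
  (forall z, enorm z <= c * enorm (B *m z)) -> 2 * c * enorm b < enorm y ->
  enorm b <= enorm (b - B *m y).
Proof.
move=> c_ge0 B_coercive y_far.
have := lt_le_trans y_far (B_coercive y).
have := ler_enorm_distD (B *m y) b 0; rewrite !subr0 (enorm_distC (B *m y)).
have := enorm_ge0 b; nra.
Qed.

Lemma mulmx_tr_entry_continuous (B : 'M[R]_(k, n)) i :
  continuous (fun r : 'rV[R]_n => (B *m r^T) i 0).
Proof.
have [l l_ge0 B_lip] := mulmx_tr_lipschitz B.
apply: (lipschitz_continuous l_ge0) => r r'; apply: le_trans (B_lip r r').
have -> : (B *m r^T) i 0 - (B *m r'^T) i 0 = (B *m r^T - B *m r'^T) i 0 by rewrite !mxE.
exact: ler_entry_enorm.
Qed.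

Lemma enorm_sub_mulmx_tr_continuous (B : 'M[R]_(k, n)) b :
  continuous (fun r : 'rV[R]_n => enorm (b - B *m r^T)).
Proof.
have [l l_ge0 B_lip] := mulmx_tr_lipschitz B.
apply: (lipschitz_continuous l_ge0) => r r'.
apply: le_trans (ler_enorm_dist_dist _ _) _.
have -> : b - B *m r^T - (b - B *m r'^T) = B *m r'^T - B *m r^T.
  by apply/matrixP => i j; rewrite !mxE; ring.
by rewrite distrC.
Qed.

Lemma compact_nonneg_mulmx_tr_ball (B : 'M[R]_(k, n)) M :
  compact (\bigcap_i [set r : 'rV[R]_n | 0 <= (B *m r^T) i 0] `&` [set r | `|r| <= M]).
Proof.
apply: bounded_closed_compact.
  exists M; split; first exact: num_real.
  by move=> M' M'_gt r [_ /= r_le]; apply: le_trans r_le (ltW M'_gt).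
apply: closedI.
  apply: closed_bigI => i _.
  have entry_cont : continuous (fun r : 'rV[R]_n => (B *m r^T) i 0).
    exact: mulmx_tr_entry_continuous.
  exact: (proj1 (continuous_closedP _) entry_cont _ (@closed_ge _ 0)).
exact: (proj1 (continuous_closedP _) (@norm_continuous _ _) _ (@closed_le _ M)).
Qed.

(* Minimise over the compact part [|r| <= 2 c |b|]: farther points of the cone are farther
   from [b] than [0] is. *)
Lemma nonneg_range_nearest (B : 'M[R]_(k, n)) b c : 0 <= c ->
  (forall z, enorm z <= c * enorm (B *m z)) -> exists q, nearest (nonneg_range B) b q.
Proof.
move=> c_ge0 B_coercive.
pose M := 2 * c * enorm b.
pose X := \bigcap_i [set r : 'rV[R]_n | 0 <= (B *m r^T) i 0] `&` [set r | `|r| <= M].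
pose f r := enorm (b - B *m r^T).
have X0 : X 0.
  split=> [i _|]; first by rewrite /= trmx0 mulmx0 mxE.
  by rewrite /= normr0 mulr_ge0 ?mulr_ge0 ?enorm_ge0.
have X_compact : compact X by exact: compact_nonneg_mulmx_tr_ball.
have f_cont : continuous f by exact: enorm_sub_mulmx_tr_continuous.
have [r0 X_r0 r0_min] :=
  compact_EVT_min (ex_intro _ 0 X0) X_compact (continuous_subspaceT f_cont).
move: X_r0; rewrite inE => -[r0_ge0 _].
exists (B *m r0^T); split=> [|_ [y y_ge0 <-]]; first by exists r0^T => // i; exact: r0_ge0.
have [y_near|y_far] := leP `|y^T| M.
  have := r0_min y^T; rewrite inE /f trmxK; apply; split => // i _ /=.
  by rewrite trmxK; exact: y_ge0.
apply: le_trans (coercive_far_enorm_ge c_ge0 B_coercive _).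
  by have := r0_min 0; rewrite inE /f trmx0 mulmx0 subr0; apply.
by apply: lt_le_trans y_far _; have := mx_norm_le_enorm y^T; rewrite trmxK.
Qed.

End NonnegRange.

Lemma normr_normB_ge0 (R : realDomainType) (u v : R) :
  0 <= u * v -> `| `|u| - `|v| | = `|u - v|.
Proof.
move=> uv_ge0; apply/eqP; rewrite -(eqrXn2 (_ : 0 < 2)%N) ?normr_ge0 //.
rewrite !real_normK ?num_real // !sqrrB -normrM ger0_norm // !real_normK ?num_real //.
Qed.

Lemma normr_normB_le0 (R : realDomainType) (u v : R) :
  u * v <= 0 -> `| `|u| - `|v| | = `|u + v|.
Proof.
move=> uv_le0; have := @normr_normB_ge0 _ u (- v); rewrite normrN opprK; apply.
by rewrite mulrN oppr_ge0.
Qed.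

Section PhaseRetrieval.
Variables (R : realType) (m d : nat) (A : 'M[R]_(m, d)).

Lemma diag_mulmxE (w : 'rV[R]_m) (x : 'cV[R]_d) i :
  (diag_mx w *m A *m x) i 0 = w 0 i * (A *m x) i 0.
Proof. by rewrite -mulmxA mul_diag_mx mxE. Qed.

Definition sign_row (s : {set 'I_m}) : 'rV[R]_m := \row_i (if i \in s then 1 else -1).

Definition sign_cone s := nonneg_range (diag_mx (sign_row s) *m A).

Lemma sign_mulmx_abs s x : (forall i, 0 <= (diag_mx (sign_row s) *m A *m x) i 0) ->
  diag_mx (sign_row s) *m A *m x = absv (A *m x).
Proof.
move=> sx_ge0; apply/matrixP => i j; rewrite (ord1 j) [RHS]mxE.
move: (sx_ge0 i); rewrite !diag_mulmxE mxE.
case: ifP => _; rewrite ?mul1r ?mulN1r => Ax; first by rewrite ger0_norm.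
by rewrite ler0_norm // -oppr_ge0.
Qed.

Lemma KA_bigcup : KA A = \bigcup_s sign_cone s.
Proof.
apply/seteqP; split=> [_ [x ->]|_ [s _ [x sx_ge0 <-]]]; last first.
  by exists x; rewrite sign_mulmx_abs.
pose s : {set 'I_m} := [set i | 0 <= (A *m x) i 0]%SET.
have sx_ge0 i : 0 <= (diag_mx (sign_row s) *m A *m x) i 0.
  rewrite diag_mulmxE mxE inE; case: ifP => [|/negbT]; first by rewrite mul1r.
  by rewrite -ltNge mulN1r oppr_ge0 => /ltW.
by exists s => //; exists x => //; rewrite sign_mulmx_abs.
Qed.

Lemma enorm_sign_mulmx s z : enorm (diag_mx (sign_row s) *m A *m z) = enorm (A *m z).
Proof.
congr Num.sqrt; apply: eq_bigr => i _.
by rewrite diag_mulmxE mxE exprMn; case: ifP; rewrite ?sqrrN expr1n mul1r.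
Qed.

Lemma phase_retrieval_trivial_kernel : phase_retrieval A -> trivial_kernel A.
Proof.
move=> PR z Az0; have : absv (A *m z) = absv (A *m 0) by rewrite Az0 mulmx0.
by case/PR => ->; rewrite ?oppr0.
Qed.

Lemma sign_cone_nearest s b : phase_retrieval A -> exists q, nearest (sign_cone s) b q.
Proof.
move=> /phase_retrieval_trivial_kernel /trivial_kernel_enorm_lbound [c c_ge0 A_coercive].
by apply: nonneg_range_nearest c_ge0 _ => z; rewrite enorm_sign_mulmx.
Qed.

Lemma nearest_PhiA b p : nearest (KA A) b p -> exists2 x, PhiA A b x & p = absv (A *m x).
Proof.
move=> [[x ->] p_min]; exists x => // z.
rewrite ler_pXn2r ?nnegrE ?enorm_ge0 // enorm_distC [leRHS]enorm_distC.
by apply: p_min; exists z.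
Qed.

Lemma distPhi_le b b' x y c : PhiA A b x -> PhiA A b' y -> c = 1 \/ c = -1 ->
  distPhi A b b' <= enorm (x - c *: y).
Proof.
move=> bx b'y c_sign; apply: ge_inf; last by exists x, y, c.
by exists 0 => _ [? [? [? [_ _ _ ->]]]]; exact: enorm_ge0.
Qed.

Definition select_row (S : {set 'I_m}) : 'rV[R]_m := \row_i (i \in S)%:R.

(* A witness of non-injectivity on [S] and one on its complement combine into two
   vectors [u + v], [u - v] with the same [|A _|] that are not equal up to sign. *)
Lemma complement_property S : phase_retrieval A ->
  trivial_kernel (diag_mx (select_row S) *m A) \/
  trivial_kernel (diag_mx (select_row (~: S)) *m A).
Proof.
move=> PR; apply: contrapT => /not_orP [/existsNP [u /not_implyP [Su u_neq0]]].
move=> /existsNP [v /not_implyP [Sv v_neq0]].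
have Au i : i \in S -> (A *m u) i 0 = 0.
  move=> iS; have := congr1 (fun w : 'cV[R]_m => w i 0) Su.
  by rewrite /= diag_mulmxE !mxE iS mul1r.
have Av i : i \notin S -> (A *m v) i 0 = 0.
  move=> iS; have := congr1 (fun w : 'cV[R]_m => w i 0) Sv.
  by rewrite /= diag_mulmxE !mxE inE iS mul1r.
have : absv (A *m (u + v)) = absv (A *m (u - v)).
  apply/matrixP => i j; rewrite (ord1 j) [LHS]mxE [RHS]mxE mulmxDr mulmxBr.
  rewrite [(_ + _ : 'cV_m) i 0]mxE [(_ - _ : 'cV_m) i 0]mxE [(- _ : 'cV_m) i 0]mxE.
  by case: (boolP (i \in S)) => [/Au|/Av] ->; rewrite ?add0r ?normrN // oppr0 !addr0.
have twice_eq0 (w : 'cV[R]_d) : w + w = 0 -> w = 0.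
  by rewrite -mulr2n -scaler_nat => /eqP; rewrite scaler_eq0 pnatr_eq0 => /eqP.
case/PR => uv; [apply: v_neq0 | apply: u_neq0]; apply: twice_eq0.
  move/(congr1 (fun w => w - (u - v))): uv; rewrite subrr => <-.
  by apply/matrixP => i j; rewrite !mxE; ring.
move/(congr1 (fun w => w + (u - v))): uv; rewrite addNr => <-.
by apply/matrixP => i j; rewrite !mxE; ring.
Qed.

Lemma phase_retrieval_lower_bound : phase_retrieval A ->
  exists2 C, 0 < C & forall x y, exists2 c : R, c = 1 \/ c = -1 &
    enorm (x - c *: y) <= C * enorm (absv (A *m x) - absv (A *m y)).
Proof.
move=> PR; pose sel S := diag_mx (select_row S) *m A.
have /choice [k kP] : forall S, exists k, 0 <= k /\
    (trivial_kernel (sel S) -> forall z, enorm z <= k * enorm (sel S *m z)).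
  move=> S; have [S_inj|S_not_inj] := pselect (trivial_kernel (sel S)).
    by have [k k_ge0 kS] := trivial_kernel_enorm_lbound S_inj; exists k.
  by exists 0; split=> // /S_not_inj.
pose C := 1 + \sum_S k S.
have k_le_C S : k S <= C.
  rewrite /C (bigD1 S) //= addrCA ler_wpDr // addr_ge0 // sumr_ge0 // => T _.
  by case: (kP T).
exists C => [|x y]; first by rewrite ltr_wpDr // sumr_ge0 // => T _; case: (kP T).
set E := enorm _.
have bound S z : trivial_kernel (sel S) -> enorm (sel S *m z) <= E -> enorm z <= C * E.
  move=> S_inj Sz; apply: le_trans (proj2 (kP S) S_inj z) _.
  by apply: ler_pM; [case: (kP S) | exact: enorm_ge0 | exact: k_le_C | exact: Sz].
(* On [S], [||Ax|_i - |Ay|_i| = |A(x - y)|_i]; off [S], it is [|A(x + y)|_i]. *)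
pose S := [set i | 0 <= (A *m x) i 0 * (A *m y) i 0]%SET.
case: (complement_property S PR) => [S_inj|Sc_inj].
  exists 1; [by left | rewrite scale1r; apply: bound S_inj _].
  apply: enorm_le_entrywise => i; rewrite diag_mulmxE mulmxBr /E /S.
  move: (A *m x) (A *m y) => a a'; rewrite !mxE inE.
  case: (boolP (0 <= _ * _)) => [/normr_normB_ge0 ->|_]; first by rewrite mul1r.
  by rewrite mul0r normr0 normr_ge0.
exists (-1); [by right | rewrite scaleN1r opprK; apply: bound Sc_inj _].
apply: enorm_le_entrywise => i; rewrite diag_mulmxE mulmxDr /E /S.
move: (A *m x) (A *m y) => a a'; rewrite !mxE !inE -ltNge.
case: (boolP (_ * _ < 0)) => [/ltW/normr_normB_le0 ->|_]; first by rewrite mul1r.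
by rewrite mul0r normr0 normr_ge0.
Qed.

End PhaseRetrieval.

Theorem theorem5p5 (R : realType) (m d : nat) (A : 'M[R]_(m, d)) :
  phase_retrieval A ->
  exists2 alpha : R, 0 < alpha &
    forall Omega : set 'cV[R]_m,
      convex_domain Omega -> Omega `<=` UA A ->
      forall b b' : 'cV[R]_m, Omega b -> Omega b' ->
        alpha * distPhi A b b' <= enorm (b - b').
Proof.
move=> PR; have [C C_gt0 lower_bound] := phase_retrieval_lower_bound PR.
exists C^-1; first by rewrite invr_gt0.
move=> Omega [_ _ Omega_convex] Omega_U b b' Ob Ob'.
have [p [bp _]] := Omega_U b Ob.
have [p' [bp' _]] := Omega_U b' Ob'.
have pp' : enorm (p - p') <= enorm (b - b').
  move: bp bp'; rewrite KA_bigcup => bp bp'.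
  have cone_convex s : convex_set (sign_cone A s) by exact: nonneg_range_convex.
  have cone_nearest s c : exists q, nearest (sign_cone A s) c q := sign_cone_nearest s c PR.
  apply: (unique_nearest_bigcup_segment cone_convex cone_nearest) bp bp' => t t01.
  by have := Omega_U _ (Omega_convex b' b t Ob' Ob t01); rewrite /UA /= KA_bigcup.
have [x bx px] := nearest_PhiA bp.
have [y b'y py] := nearest_PhiA bp'.
have [c c_sign xy] := lower_bound x y; rewrite -px -py in xy.
rewrite -(ler_pM2l C_gt0) mulrA mulfV ?gt_eqF // mul1r.
apply: le_trans (distPhi_le bx b'y c_sign) (le_trans xy _).
by rewrite ler_pM2l.
Qed.
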